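(* Let $\gamma\in\{0\}\cup(0,\infty)\cup\{\infty\}$. The minimum of the convex relaxed problem $\min_{u\in\mathcal{B}'}\ \sum_{i=1}^n\sum_{x\in V}C_i(x)u_i(x)+\sum_{i=1}^n TV_w(u_i)$ — with no size information if $\gamma=0$, with the penalty term $\sum_{i=1}^nP_\gamma(\|u_i\|)$ added to the energy if $0<\gamma<\infty$, and subject to the size constraints $S_i^\ell\le\|u_i\|\le S_i^u$ for all $i$ if $\gamma=\infty$ — equals the value of the dual problem $$\sup_{q,\rho^1,\rho^2}\ \sum_{x\in V}\min_{i\in I}\Big(C_i(x)+(\mathrm{div}_w q_i)(x)+\rho_i^2-\rho_i^1\Big)+\sum_{i=1}^n\big(\rho_i^1S_i^\ell-\rho_i^2S_i^u\big),$$ subject to $(q_1,\dots,q_n)\in S^n_\infty$ and $\rho_i^1,\rho_i^2\in[0,\gamma]$ for $i=1,\dots,n$ (where $[0,\infty]$ means $[0,\infty)$); i.e. the relaxed problem can equivalently be formulated as this dual problem.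
   Context: Let $G=(V,E)$ be a finite undirected graph with symmetric weights $w(x,y)=w(y,x)>0$ for $\{x,y\}\in E$ and $w(x,y)=0$ otherwise. For $v:V\to\mathbb{R}$, $TV_w(v)=\frac12\sum_{x,y\in V}w(x,y)|v(y)-v(x)|$. For $\phi:V\times V\to\mathbb{R}$, the divergence is $(\mathrm{div}_w\phi)(x)=\frac12\sum_{y\in V}w(x,y)(\phi(x,y)-\phi(y,x))$ and $\|\phi\|_{\infty}=\max_{x,y\in V}|\phi(x,y)|$. $S^n_\infty=\{(q_1,\dots,q_n):\ q_i:V\times V\to\mathbb{R},\ \|q_i\|_\infty\le1\ \forall i\}$. Let $n\ge2$, $I=\{1,\dots,n\}$, $C_i:V\to\mathbb{R}$ given. For $u=(u_1,\dots,u_n):V\to\mathbb{R}^n$, $\|u_i\|=\sum_{x\in V}u_i(x)$. $\mathcal{B}'=\{u:V\to[0,1]^n:\sum_iu_i(x)=1\ \forall x\}$. Size bounds are integers $0\le S_i^\ell\le S_i^u$ with $\sum_iS_i^\ell\le|V|\le\sum_iS_i^u$. For $0<\gamma<\infty$, $P_\gamma(t)=0$ if $S_i^\ell\le t\le S_i^u$, $\gamma(t-S_i^u)$ if $t>S_i^u$, $\gamma(S_i^\ell-t)$ if $t<S_i^\ell$. *)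

From HB Require Import structures.
From mathcomp Require Import all_boot all_order all_algebra.
From mathcomp Require Import reals.
Set Implicit Arguments. Unset Strict Implicit. Unset Printing Implicit Defensive.
Import Order.TTheory GRing.Theory Num.Theory.
Local Open Scope ring_scope.

Section Defs.
Variable R : realType.
Variable V : finType.

Definition TVw (w : V -> V -> R) (v : V -> R) : R :=
  2^-1 * \sum_(x : V) \sum_(y : V) w x y * `|v y - v x|.

Definition divw (w : V -> V -> R) (phi : V -> V -> R) (x : V) : R :=
  2^-1 * \sum_(y : V) w x y * (phi x y - phi y x).

Definition supnorm_le1 (phi : V -> V -> R) : Prop :=
  forall x y, `|phi x y| <= 1.

Definition msize (v : V -> R) : R := \sum_(x : V) v x.

(* minimum over a finite index type (0 if empty; never used when empty) *)
Definition minI (I : finType) (f : I -> R) : R :=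
  if [pick i : I] is Some i0 then \big[Num.min/f i0]_(i : I) f i else 0.

Definition Pgam (g : R) (Sl Su : nat) (t : R) : R :=
  if (Sl%:R <= t) && (t <= Su%:R) then 0
  else if Su%:R < t then g * (t - Su%:R)
  else g * (Sl%:R - t).

End Defs.

Inductive gam (R : realType) : Type :=
  | gZero : gam R
  | gFin : R -> gam R
  | gInf : gam R.
Arguments gZero {R}. Arguments gInf {R}.

Section Problem.
Variable R : realType.
Variable V : finType.
Variable n : nat.
Variable w : V -> V -> R.
Variable C : 'I_n -> V -> R.
Variables Sl Su : 'I_n -> nat.
Variable gamma : gam R.

Definition inB' (u : 'I_n -> V -> R) : Prop :=
  (forall i x, 0 <= u i x <= 1) /\ (forall x, \sum_(i < n) u i x = 1).

Definition primal_feasible (u : 'I_n -> V -> R) : Prop :=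
  inB' u /\
  (match gamma with
   | gInf => forall i, (Sl i)%:R <= msize (u i) <= (Su i)%:R
   | _ => True
   end).

Definition primal_energy (u : 'I_n -> V -> R) : R :=
  \sum_(i < n) \sum_(x : V) C i x * u i x + \sum_(i < n) TVw w (u i) +
  (match gamma with
   | gFin g => \sum_(i < n) Pgam g (Sl i) (Su i) (msize (u i))
   | _ => 0
   end).

Definition in_0_gamma (r : R) : Prop :=
  match gamma with
  | gZero => r = 0
  | gFin g => 0 <= r <= g
  | gInf => 0 <= r
  end.

Definition dual_feasible (q : 'I_n -> V -> V -> R) (rho1 rho2 : 'I_n -> R) : Prop :=
  (forall i, supnorm_le1 (q i)) /\
  (forall i, in_0_gamma (rho1 i) /\ in_0_gamma (rho2 i)).

Definition dual_value (q : 'I_n -> V -> V -> R) (rho1 rho2 : 'I_n -> R) : R :=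
  \sum_(x : V) minI (fun i : 'I_n => C i x + divw w (q i) x + rho2 i - rho1 i) +
  \sum_(i < n) (rho1 i * (Sl i)%:R - rho2 i * (Su i)%:R).

End Problem.

From mathcomp Require Import all_boot all_order all_algebra.
From mathcomp Require Import reals.
From mathcomp Require Import ring lra.
Set Implicit Arguments. Unset Strict Implicit. Unset Printing Implicit Defensive.
Import Order.TTheory GRing.Theory Num.Theory.
Local Open Scope ring_scope.

(* Weak duality holds because the Lagrangian lies below the energy of every
   feasible [u] (TV is a supremum over fields [|q| <= 1], the penalty a
   supremum over [rho in [0, gamma]]) and above the dual value (a convex
   combination of dual costs exceeds their minimum). For strong duality, the
   energy is the maximum of the finitely many Lagrangians at the vertices
   [q = +-1], [rho in {0, gamma}], so the relaxed problem is a finite linear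
   program in [u] and an epigraph variable [t]. Fourier-Motzkin elimination
   shows that it attains its minimum with a nonnegative certificate; the
   certificate weighs the vertices with total weight one, and the weighted
   average of the vertices, with the multipliers of the hard size constraints
   added to [rho] when [gamma = oo], is a dual point whose value is at least
   the primal minimum. *)

Section FourierMotzkin.
Variables (R : realFieldType) (X : finType).

(* [(a, b)] encodes the constraint [\sum_i a i * x i - b <= 0]. *)
Definition affine := ({ffun X -> R} * R)%type.

Definition aff_eval (f : affine) (x : X -> R) : R := \sum_i f.1 i * x i - f.2.

Definition aff_sat (s : seq affine) (x : X -> R) : Prop :=
  forall f, f \in s -> aff_eval f x <= 0.

Definition set_coord (x : X -> R) (v : X) (t : R) : X -> R :=
  fun i => if i == v then t else x i.

Definition aff_comb (c1 : R) (f1 : affine) (c2 : R) (f2 : affine) : affine :=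
  ([ffun i => c1 * f1.1 i + c2 * f2.1 i], c1 * f1.2 + c2 * f2.2).

Lemma aff_eval_set_coord f x v t :
  aff_eval f (set_coord x v t) = f.1 v * t + aff_eval f (set_coord x v 0).
Proof.
have sumE t' : \sum_i f.1 i * set_coord x v t' i =
    f.1 v * t' + \sum_(i | i != v) f.1 i * x i.
  rewrite (bigD1 v) //= /set_coord eqxx; congr (_ + _).
  by apply: eq_bigr => i /negbTE ->.
by rewrite /aff_eval !sumE mulr0 add0r addrA.
Qed.

Lemma aff_eval_set_coord_id f x v : aff_eval f (set_coord x v (x v)) = aff_eval f x.
Proof.
rewrite /aff_eval /set_coord; congr (_ - _).
by apply: eq_bigr => i _; case: eqP => // ->.
Qed.

Lemma aff_eval_comb c1 f1 c2 f2 x :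
  aff_eval (aff_comb c1 f1 c2 f2) x = c1 * aff_eval f1 x + c2 * aff_eval f2 x.
Proof.
rewrite /aff_eval /=; under eq_bigr do rewrite ffunE mulrDl -!mulrA.
rewrite big_split /= -!mulr_sumr; ring.
Qed.

Lemma aff_comb1 f : aff_comb 1 f 0 f = f.
Proof.
case: f => a b; rewrite /aff_comb /=; congr pair; last by ring.
by apply/ffunP => i; rewrite ffunE /=; ring.
Qed.

Definition fm_step (v : X) (s : seq affine) : seq affine :=
  [seq f <- s | (f : affine).1 v == 0] ++
  [seq aff_comb (- (l : affine).1 v) u ((u : affine).1 v) l
     | u <- [seq f <- s | 0 < (f : affine).1 v],
       l <- [seq f <- s | (f : affine).1 v < 0]].

Lemma fm_step_coef0 v s f : f \in fm_step v s -> f.1 v = 0.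
Proof.
rewrite mem_cat => /orP [|/allpairsP [[u l] [_ _ ->]]].
  by rewrite mem_filter => /andP [/eqP].
by rewrite /= ffunE; ring.
Qed.

Lemma fm_step_comb v s f : f \in fm_step v s ->
  exists c1 f1 c2 f2, [/\ 0 <= c1, 0 <= c2, f1 \in s, f2 \in s &
                       f = aff_comb c1 f1 c2 f2].
Proof.
rewrite mem_cat => /orP [|/allpairsP [[u l] [/= su sl ->]]].
  rewrite mem_filter => /andP [_ sf]; exists 1, f, 0, f.
  by rewrite aff_comb1 ler01 lexx.
move: su sl; rewrite !mem_filter => /andP [u_gt0 su] /andP [l_lt0 sl].
by exists (- l.1 v), u, (u.1 v), l; rewrite oppr_ge0 !ltW.
Qed.

Lemma exists_lower_bound (Us : seq R) : exists t, forall u, u \in Us -> t <= u.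
Proof.
elim: Us => [|u Us [t Ht]]; first by exists 0.
exists (Num.min u t) => u'; rewrite inE => /orP [/eqP ->|/Ht ?].
  by rewrite ge_min lexx.
by rewrite ge_min orbC; apply/orP; left.
Qed.

Lemma exists_between (Ls Us : seq R) :
  (forall l u, l \in Ls -> u \in Us -> l <= u) ->
  exists t, (forall l, l \in Ls -> l <= t) /\ (forall u, u \in Us -> t <= u).
Proof.
elim: Ls => [|l Ls IH] lLU.
  by have [t Ht] := exists_lower_bound Us; exists t.
have [|t [Ht1 Ht2]] := IH.
  by move=> l' u Hl Hu; apply: lLU => //; rewrite inE Hl orbT.
exists (Num.max l t); split.
  move=> l'; rewrite inE => /orP [/eqP ->|/Ht1 ?]; first by rewrite le_max lexx.
  by rewrite le_max orbC; apply/orP; left.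
by move=> u Hu; rewrite ge_max Ht2 // andbT; apply: lLU; rewrite ?inE ?eqxx.
Qed.

Lemma fm_step_lift v s x : aff_sat (fm_step v s) x ->
  exists t, aff_sat s (set_coord x v t).
Proof.
move=> sat_x; pose rest f := aff_eval f (set_coord x v 0).
pose bound f := - rest f / f.1 v.
pose Ls := [seq bound f | f <- [seq f <- s | (f : affine).1 v < 0]].
pose Us := [seq bound f | f <- [seq f <- s | 0 < (f : affine).1 v]].
have [|t [Ht1 Ht2]] := exists_between (Ls := Ls) (Us := Us).
  move=> _ _ /mapP [l sl ->] /mapP [u su ->].
  have comb_in : aff_comb (- l.1 v) u (u.1 v) l \in fm_step v s.
    by rewrite mem_cat; apply/orP; right; apply/allpairsP; exists (u, l).
  have := sat_x _ comb_in; rewrite -(aff_eval_set_coord_id _ _ v).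
  rewrite aff_eval_set_coord (fm_step_coef0 comb_in) mul0r add0r aff_eval_comb.
  move: sl su; rewrite !mem_filter => /andP [l_lt0 _] /andP [u_gt0 _] H.
  rewrite /bound ler_ndivrMr // mulrAC ler_pdivrMr // -subr_ge0.
  move: H; rewrite -/(rest u) -/(rest l).
  move: (rest u) (rest l) (u.1 v) (l.1 v) => a b c d H.
  have -> : - b * c - - a * d = - (- d * a + c * b) by ring.
  by rewrite oppr_ge0.
exists t => f sf; rewrite aff_eval_set_coord -/(rest f).
case: (ltgtP (f.1 v) 0) => fv.
- have := Ht1 (bound f); rewrite ler_ndivrMr //.
  have -> : bound f \in Ls by apply/mapP; exists f; rewrite ?mem_filter ?fv.
  by move=> /(_ isT); rewrite mulrC; lra.
- have := Ht2 (bound f); rewrite ler_pdivlMr //.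
  have -> : bound f \in Us by apply/mapP; exists f; rewrite ?mem_filter ?fv.
  by move=> /(_ isT); rewrite mulrC; lra.
- have f_in : f \in fm_step v s by rewrite mem_cat mem_filter fv eqxx sf.
  have := sat_x _ f_in; rewrite -(aff_eval_set_coord_id _ _ v).
  by rewrite aff_eval_set_coord fv !mul0r !add0r.
Qed.

Definition fm_elim (vs : seq X) (s : seq affine) : seq affine := foldr fm_step s vs.

Lemma fm_elim_ind (P : affine -> Prop) vs s :
  (forall c1 f1 c2 f2, 0 <= c1 -> 0 <= c2 -> P f1 -> P f2 -> P (aff_comb c1 f1 c2 f2)) ->
  (forall f, f \in s -> P f) -> forall f, f \in fm_elim vs s -> P f.
Proof.
move=> P_comb P_s; elim: vs => [|v vs IH] f; first exact: P_s.
move=> /= /fm_step_comb [c1 [f1 [c2 [f2 [? ? f1_in f2_in ->]]]]].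
by apply: P_comb => //; apply: IH.
Qed.

Lemma fm_elim_coef0 vs s f : f \in fm_elim vs s -> forall v, v \in vs -> f.1 v = 0.
Proof.
elim: vs f => [|v vs IH] f //= f_in v'; rewrite inE => /orP [/eqP ->|v'_in].
  exact: fm_step_coef0 f_in.
have [c1 [f1 [c2 [f2 [_ _ f1_in f2_in ->]]]]] := fm_step_comb f_in.
by rewrite /= ffunE (IH _ f1_in) // (IH _ f2_in) // !mulr0 addr0.
Qed.

Lemma fm_elim_lift vs s x : aff_sat (fm_elim vs s) x ->
  exists2 x', aff_sat s x' & forall i, i \notin vs -> x' i = x i.
Proof.
elim: vs x => [|v vs IH] x /= sat_x; first by exists x.
have [t /IH [x' sat_x' x'E]] := fm_step_lift sat_x.
exists x' => // i; rewrite inE negb_or => /andP [iv ivs].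
by rewrite x'E // /set_coord (negbTE iv).
Qed.

End FourierMotzkin.

Section OneDimensionalLP.
Variable R : realFieldType.

Lemma seq_argmax (T : eqType) (s : seq T) (k : T -> R) : s != [::] ->
  exists2 f, f \in s & forall g, g \in s -> k g <= k f.
Proof.
elim: s => [|a s IH] // _; have [->|s_neq0] := eqVneq s [::].
  by exists a; rewrite ?inE ?eqxx // => g; rewrite inE => /eqP ->.
have [f sf f_max] := IH s_neq0.
have [fa|af] := leP (k f) (k a).
  exists a; first by rewrite inE eqxx.
  by move=> g; rewrite inE => /orP [/eqP ->//|/f_max ?]; apply: le_trans fa.
exists f; first by rewrite inE sf orbT.
by move=> g; rewrite inE => /orP [/eqP ->|/f_max //]; apply: ltW.
Qed.

Lemma lp1_min (T : eqType) (s : seq T) (a b : T -> R) :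
  (exists t0, forall f, f \in s -> a f * t0 <= b f) ->
  (exists m, forall t, (forall f, f \in s -> a f * t <= b f) -> m <= t) ->
  exists2 f, f \in s /\ a f < 0 &
    forall g, g \in s -> a g * (b f / a f) <= b g.
Proof.
move=> [t0 t0_sat] [m m_low].
pose Lo := [seq f <- s | a f < 0].
have [Lo0|Lo_neq0] := eqVneq Lo [::].
  have a_ge0 f : f \in s -> 0 <= a f.
    move=> sf; rewrite leNgt; apply/negP => af_lt0.
    have : f \in Lo by rewrite mem_filter af_lt0 sf.
    by rewrite Lo0.
  have := m_low (Num.min t0 (m - 1)); rewrite le_min => low.
  suff /low/andP [_] : forall f, f \in s -> a f * Num.min t0 (m - 1) <= b f by lra.
  move=> f sf; apply: le_trans (t0_sat f sf).
  by rewrite ler_wpM2l ?a_ge0 // ge_min lexx.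
have [f] := seq_argmax (fun f => b f / a f) Lo_neq0.
rewrite mem_filter => /andP [af_lt0 sf] f_max; exists f => // g sg.
have [ag_lt0|ag_gt0|ag0] := ltgtP (a g) 0.
- have : g \in Lo by rewrite mem_filter ag_lt0 sg.
  by move/f_max; rewrite ler_ndivrMr // mulrC.
- apply: le_trans (t0_sat g sg); apply: ler_wpM2l; first exact: ltW.
  by rewrite ler_ndivrMr // mulrC t0_sat.
- by have := t0_sat g sg; rewrite ag0 !mul0r.
Qed.

End OneDimensionalLP.

Section LinearProgramming.
Variables (R : realFieldType) (X J : finType) (F : J -> affine R X).

Definition in_cone (f : affine R X) : Prop := exists2 y : J -> R,
  forall j, 0 <= y j & forall x, aff_eval f x = \sum_j y j * aff_eval (F j) x.

Definition sat_all (x : X -> R) : Prop := forall j, aff_eval (F j) x <= 0.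

Lemma in_cone_comb c1 f1 c2 f2 : 0 <= c1 -> 0 <= c2 -> in_cone f1 -> in_cone f2 ->
  in_cone (aff_comb c1 f1 c2 f2).
Proof.
move=> c1_ge0 c2_ge0 [y1 y1_ge0 f1E] [y2 y2_ge0 f2E].
exists (fun j => c1 * y1 j + c2 * y2 j).
  by move=> j; rewrite addr_ge0 // mulr_ge0.
move=> x; rewrite aff_eval_comb f1E f2E !mulr_sumr -big_split /=.
by apply: eq_bigr => j _; ring.
Qed.

Lemma in_cone_gen j0 : in_cone (F j0).
Proof.
exists (fun j => (j == j0)%:R) => [j|x]; first exact: ler0n.
rewrite (bigD1 j0) //= eqxx mul1r big1 ?addr0 //.
by move=> j /negbTE ->; rewrite mul0r.
Qed.

Lemma in_cone_sat f x : in_cone f -> sat_all x -> aff_eval f x <= 0.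
Proof.
by move=> [y y_ge0 ->] sat_x; apply: sumr_le0 => j _; rewrite mulr_ge0_le0.
Qed.

Lemma fm_project (z : X) : exists sf : seq (affine R X),
  [/\ forall f, f \in sf -> in_cone f,
      forall f x, f \in sf -> aff_eval f x = f.1 z * x z - f.2 &
      forall t, aff_sat sf (fun=> t) -> exists2 x, sat_all x & x z = t].
Proof.
pose vs := [seq i <- enum X | i != z].
exists (fm_elim vs [seq F j | j <- enum J]); split.
- apply: fm_elim_ind; first by move=> *; apply: in_cone_comb.
  by move=> f /mapP [j _ ->]; apply: in_cone_gen.
- move=> f x f_in; rewrite /aff_eval (bigD1 z) //= big1 ?addr0 // => i iz.
  by rewrite (fm_elim_coef0 f_in) ?mul0r // mem_filter iz mem_enum.
- move=> t /fm_elim_lift [x sat_x xE]; exists x.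
    by move=> j; apply: sat_x; apply/mapP; exists j; rewrite ?mem_enum.
  by rewrite xE // mem_filter eqxx.
Qed.

Lemma lp_min (z : X) :
  (exists x0, sat_all x0) -> (exists m, forall x, sat_all x -> m <= x z) ->
  exists xs, [/\ sat_all xs, forall x, sat_all x -> xs z <= x z &
    exists2 y : J -> R, forall j, 0 <= y j &
      forall x, xs z - x z = \sum_j y j * aff_eval (F j) x].
Proof.
move=> [x0 sat_x0] [m m_low].
have [sf [sf_cone sfE sf_lift]] := fm_project z.
have sat_sf x : sat_all x -> forall f, f \in sf -> f.1 z * x z <= f.2.
  move=> sat_x f f_in; rewrite -subr_le0 -sfE //.
  exact: in_cone_sat (sf_cone _ f_in) sat_x.
have sf_low : exists m, forall t, (forall f, f \in sf -> f.1 z * t <= f.2) -> m <= t.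
  exists m => t t_sat; have [|x sat_x <-] := sf_lift t; last exact: m_low.
  by move=> f f_in; rewrite sfE // subr_le0 t_sat.
have [f [f_in fz_lt0] f_opt] :=
  lp1_min (ex_intro _ (x0 z) (sat_sf _ sat_x0)) sf_low.
have [|xs sat_xs xsE] := sf_lift (f.2 / f.1 z).
  by move=> g g_in; rewrite sfE // subr_le0 f_opt.
have xs_min x : sat_all x -> xs z <= x z.
  by move=> sat_x; rewrite xsE ler_ndivrMr // mulrC sat_sf.
exists xs; split => //.
have [y y_ge0 fE] := sf_cone _ f_in.
exists (fun j => y j / - f.1 z) => [j|x].
  by rewrite divr_ge0 // oppr_ge0 ltW.
under eq_bigr do rewrite mulrAC.
rewrite -mulr_suml -fE sfE // xsE; field.
by rewrite lt_eqF.
Qed.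

End LinearProgramming.

Section MinI.
Variables (R : realType) (I : finType).

Lemma minI_le (f : I -> R) i : minI f <= f i.
Proof.
rewrite /minI; case: pickP => [i0 _|/(_ i) //]; exact: bigmin_le.
Qed.

Lemma minI_arg_min (f : I -> R) (i0 : I) : minI f = f [arg min_(i < i0) f i]%O.
Proof.
apply/eqP; rewrite eq_le minI_le /minI; case: pickP => [i1 _|/(_ i0) //].
by case: arg_minP => // i _ i_min; apply: le_bigmin => [|j _]; apply: i_min.
Qed.

End MinI.

Section Penalty.
Variables (R : realType) (g : R) (a b : nat).
Hypothesis a_le_b : (a <= b)%N.

Lemma PgamE t : Pgam g a b t =
  (if t < a%:R then g else 0) * (a%:R - t) + (if b%:R < t then g else 0) * (t - b%:R).
Proof.
have ab : (a%:R : R) <= b%:R by rewrite ler_nat.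
rewrite /Pgam; case: (leP a%:R t) => ta; case: (leP t b%:R) => tb /=.
- by rewrite !mul0r addr0.
- by rewrite mul0r add0r.
- by rewrite mul0r addr0.
- by have := lt_trans tb (lt_le_trans ta ab); rewrite ltxx.
Qed.

Lemma lagrange_le_Pgam r1 r2 t : 0 <= r1 <= g -> 0 <= r2 <= g ->
  r1 * (a%:R - t) + r2 * (t - b%:R) <= Pgam g a b t.
Proof.
move=> /andP [r1_ge0 r1_le] /andP [r2_ge0 r2_le].
have ab : (a%:R : R) <= b%:R by rewrite ler_nat.
rewrite PgamE; apply: lerD; case: ltP => [ta|ta].
- by apply: ler_wpM2r => //; rewrite subr_ge0 ltW.
- by rewrite mul0r mulr_ge0_le0 // subr_le0.
- by apply: ler_wpM2r => //; rewrite subr_ge0 ltW.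
- by rewrite mul0r mulr_ge0_le0 // subr_le0.
Qed.

End Penalty.

Section GraphTV.
Variables (R : realType) (V : finType) (w : V -> V -> R).
Hypothesis w_sym : forall x y, w x y = w y x.
Hypothesis w_ge0 : forall x y, 0 <= w x y.

Lemma sum_mul_divw (u : V -> R) (q : V -> V -> R) :
  \sum_x u x * divw w q x = 2^-1 * \sum_x \sum_y w x y * q x y * (u x - u y).
Proof.
have swap : \sum_x \sum_y w x y * q y x * u x = \sum_x \sum_y w x y * q x y * u y.
  by rewrite exchange_big; apply: eq_bigr => x _; apply: eq_bigr => y _; rewrite w_sym.
transitivity (2^-1 * (\sum_x \sum_y w x y * q x y * u x -
                      \sum_x \sum_y w x y * q y x * u x)).
  rewrite -sumrB mulr_sumr; apply: eq_bigr => x _.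
  rewrite -sumrB /divw mulrCA mulr_sumr; congr (_ * _).
  by apply: eq_bigr => y _; ring.
rewrite swap -sumrB; congr (_ * _); apply: eq_bigr => x _.
by rewrite -sumrB; apply: eq_bigr => y _; ring.
Qed.

Lemma sum_mul_divw_le_TVw (u : V -> R) (q : V -> V -> R) :
  supnorm_le1 q -> \sum_x u x * divw w q x <= TVw w u.
Proof.
move=> q_le1; rewrite sum_mul_divw /TVw.
apply: ler_wpM2l; first by rewrite invr_ge0 ler0n.
apply: ler_sum => x _; apply: ler_sum => y _; rewrite -mulrA.
apply: ler_wpM2l => //; apply: le_trans (ler_norm _) _.
by rewrite normrM distrC ler_piMl.
Qed.

Definition sign_field (u : V -> R) (x y : V) : R := if u y <= u x then 1 else -1.

Lemma sum_mul_divw_sign_field (u : V -> R) :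
  \sum_x u x * divw w (sign_field u) x = TVw w u.
Proof.
rewrite sum_mul_divw /TVw; congr (_ * _); apply: eq_bigr => x _.
apply: eq_bigr => y _; rewrite -mulrA /sign_field; congr (_ * _).
by case: lerP => uyx; rewrite ?mul1r ?mulN1r ?opprB.
Qed.

Lemma eq_divw (q q' : V -> V -> R) x : (forall a b, q a b = q' a b) ->
  divw w q x = divw w q' x.
Proof.
by move=> qE; rewrite /divw; congr (_ * _); apply: eq_bigr => y _; rewrite !qE.
Qed.

Lemma divw_sum (T : finType) (c : T -> R) (q : T -> V -> V -> R) x :
  divw w (fun a b => \sum_k c k * q k a b) x = \sum_k c k * divw w (q k) x.
Proof.
rewrite /divw; under [RHS]eq_bigr do rewrite mulrCA mulr_sumr.
rewrite -mulr_sumr exchange_big; congr (_ * _); apply: eq_bigr => y _.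
by rewrite -sumrB mulr_sumr; apply: eq_bigr => k _; ring.
Qed.

End GraphTV.

Lemma exists_sum_between (R : realFieldType) (I : finType) (lo hi : I -> nat) (N : nat) :
  (forall i, lo i <= hi i)%N -> (\sum_i lo i <= N <= \sum_i hi i)%N ->
  exists2 c : I -> R, forall i, (lo i)%:R <= c i <= (hi i)%:R & \sum_i c i = N%:R.
Proof.
move=> lo_le_hi /andP [loN Nhi].
pose A : R := (\sum_i lo i)%:R; pose B : R := (\sum_i hi i)%:R.
have AN : A <= N%:R by rewrite ler_nat.
have NB : N%:R <= B by rewrite ler_nat.
(* interpolate [lo] and [hi] with the same weight [th] *)
pose th : R := if A < B then (N%:R - A) / (B - A) else 0.
have th_ge0 : 0 <= th.
  rewrite /th; case: ifP => // AB.
  by apply: divr_ge0; rewrite subr_ge0 //; apply: ltW.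
have th_le1 : th <= 1.
  by rewrite /th; case: ifP => // AB; rewrite ler_pdivrMr ?mul1r ?subr_gt0 // lerD2r.
have thE : A + th * (B - A) = N%:R.
  rewrite /th; case: ifP => AB; first by rewrite divfK ?subr_eq0 ?gt_eqF // addrC subrK.
  have AeqB : A = B by apply/eqP; rewrite eq_le (le_trans AN NB) leNgt AB.
  by rewrite mul0r addr0; apply/eqP; rewrite eq_le AN AeqB NB.
exists (fun i => (lo i)%:R + th * ((hi i)%:R - (lo i)%:R)) => [i|].
  have lohi : (lo i)%:R <= (hi i)%:R :> R by rewrite ler_nat.
  rewrite lerDl mulr_ge0 ?subr_ge0 //= -lerBrDl -[X in _ <= X]mul1r.
  by rewrite ler_wpM2r // subr_ge0.
by rewrite -thE big_split /= -mulr_sumr sumrB /A /B !natr_sum.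
Qed.

Section Duality.
Variables (R : realType) (V : finType) (n : nat) (w : V -> V -> R)
  (C : 'I_n -> V -> R) (Sl Su : 'I_n -> nat) (gamma : gam R).
Hypothesis w_sym : forall x y, w x y = w y x.
Hypothesis w_ge0 : forall x y, 0 <= w x y.
Hypothesis Sl_le_Su : forall i, (Sl i <= Su i)%N.

Local Notation energy := (primal_energy w C Sl Su gamma).
Local Notation feasible := (primal_feasible Sl Su gamma).
Local Notation dfeasible := (dual_feasible gamma).
Local Notation dvalue := (dual_value w C Sl Su).

Definition lagrangian (q : 'I_n -> V -> V -> R) (r1 r2 : 'I_n -> R)
    (u : 'I_n -> V -> R) : R :=
  \sum_(i < n) \sum_x C i x * u i x + \sum_(i < n) \sum_x u i x * divw w (q i) x +
  \sum_(i < n) (r1 i * ((Sl i)%:R - msize (u i)) + r2 i * (msize (u i) - (Su i)%:R)).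

Definition dual_cost (q : 'I_n -> V -> V -> R) (r1 r2 : 'I_n -> R) i x : R :=
  C i x + divw w (q i) x + r2 i - r1 i.

Lemma lagrangianE q r1 r2 u : lagrangian q r1 r2 u =
  \sum_(i < n) \sum_x u i x * dual_cost q r1 r2 i x +
  \sum_(i < n) (r1 i * (Sl i)%:R - r2 i * (Su i)%:R).
Proof.
rewrite /lagrangian -!big_split; apply: eq_bigr => i _ /=.
have -> : \sum_x u i x * dual_cost q r1 r2 i x = \sum_x C i x * u i x +
    \sum_x u i x * divw w (q i) x + r2 i * msize (u i) - r1 i * msize (u i).
  rewrite /msize !mulr_sumr -!big_split /= -sumrN -big_split /=.
  by apply: eq_bigr => x _; rewrite /dual_cost; ring.
ring.
Qed.

Lemma lagrangian_le_energy u q r1 r2 : feasible u -> dfeasible q r1 r2 ->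
  lagrangian q r1 r2 u <= energy u.
Proof.
move=> [_ u_sizes] [q_le1 r_in]; rewrite /lagrangian /primal_energy.
apply: lerD; first by rewrite lerD2l; apply: ler_sum => i _; apply: sum_mul_divw_le_TVw.
move: u_sizes r_in; rewrite /in_0_gamma; case: gamma => [|g|] /= u_sizes r_in.
- by apply: sumr_le0 => i _; have [-> ->] := r_in i; rewrite !mul0r addr0.
- by apply: ler_sum => i _; have [] := r_in i; apply: lagrange_le_Pgam.
- apply: sumr_le0 => i _; have [r1_ge0 r2_ge0] := r_in i.
  have /andP [Sl_le Su_ge] := u_sizes i.
  by rewrite -(addr0 0) lerD // mulr_ge0_le0 // subr_le0.
Qed.

Lemma dual_value_le_lagrangian q r1 r2 u :
  (forall i x, 0 <= u i x) -> (forall x, \sum_i u i x = 1) ->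
  dvalue q r1 r2 <= lagrangian q r1 r2 u.
Proof.
move=> u_ge0 u_sum1; rewrite lagrangianE /dual_value lerD2r exchange_big.
apply: ler_sum => x _; rewrite -[X in X <= _]mul1r -(u_sum1 x) mulr_suml.
apply: ler_sum => i _; apply: ler_wpM2l => //.
exact: (minI_le (fun i => dual_cost q r1 r2 i x)).
Qed.

Lemma weak_duality u q r1 r2 : feasible u -> dfeasible q r1 r2 ->
  dvalue q r1 r2 <= energy u.
Proof.
move=> u_feas q_feas; have [[u_01 u_sum1] _] := u_feas.
apply: le_trans (lagrangian_le_energy u_feas q_feas).
by apply: dual_value_le_lagrangian => // i x; have /andP [] := u_01 i x.
Qed.

(* At each node, all the mass goes to a label of least dual cost. *)
Lemma lagrangian_eq_dual_value q r1 r2 (i0 : 'I_n) : exists u : 'I_n -> V -> R,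
  [/\ forall i x, 0 <= u i x, forall x, \sum_i u i x = 1 &
      lagrangian q r1 r2 u = dvalue q r1 r2].
Proof.
pose best x := [arg min_(i < i0) dual_cost q r1 r2 i x]%O.
exists (fun i x => (i == best x)%:R); split => [i x|x|]; first exact: ler0n.
  by rewrite (bigD1 (best x)) //= eqxx big1 ?addr0 // => i /negbTE ->.
rewrite lagrangianE /dual_value exchange_big; congr (_ + _).
apply: eq_bigr => x _; rewrite (minI_arg_min _ i0) -/(best x).
rewrite (bigD1 (best x)) //= eqxx mul1r big1 ?addr0 // => i /negbTE ->.
by rewrite mul0r.
Qed.

Lemma lagrangian_comb (T : finType) (c : T -> R) q r1 r2 u : \sum_k c k = 1 ->
  lagrangian (fun i a b => \sum_k c k * q k i a b)
             (fun i => \sum_k c k * r1 k i) (fun i => \sum_k c k * r2 k i) u =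
  \sum_k c k * lagrangian (q k) (r1 k) (r2 k) u.
Proof.
move=> c_sum1; rewrite /lagrangian.
have divE : \sum_(i < n) \sum_x u i x * divw w (fun a b => \sum_k c k * q k i a b) x =
    \sum_k c k * \sum_(i < n) \sum_x u i x * divw w (q k i) x.
  under eq_bigr => i _ do under eq_bigr => x _ do
    rewrite (divw_sum w c (fun k => q k i)) mulr_sumr.
  under [RHS]eq_bigr do rewrite mulr_sumr.
  rewrite [RHS]exchange_big; apply: eq_bigr => i _.
  under [RHS]eq_bigr do rewrite mulr_sumr.
  rewrite [RHS]exchange_big; apply: eq_bigr => x _.
  by apply: eq_bigr => k _; ring.
have rhoE : \sum_(i < n) ((\sum_k c k * r1 k i) * ((Sl i)%:R - msize (u i)) +
                         (\sum_k c k * r2 k i) * (msize (u i) - (Su i)%:R)) =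
    \sum_k c k * \sum_(i < n) (r1 k i * ((Sl i)%:R - msize (u i)) +
                               r2 k i * (msize (u i) - (Su i)%:R)).
  under [RHS]eq_bigr do rewrite mulr_sumr.
  rewrite [RHS]exchange_big; apply: eq_bigr => i _.
  by rewrite !mulr_suml -big_split /=; apply: eq_bigr => k _; ring.
rewrite divE rhoE -[X in X + _ + _]mul1r -c_sum1 mulr_suml -!big_split /=.
by apply: eq_bigr => k _; ring.
Qed.

Lemma lagrangianD_rho q r1 r2 e1 e2 u :
  lagrangian q (fun i => r1 i + e1 i) (fun i => r2 i + e2 i) u =
  lagrangian q r1 r2 u + \sum_(i < n) (e1 i * ((Sl i)%:R - msize (u i)) +
                                      e2 i * (msize (u i) - (Su i)%:R)).
Proof.
rewrite /lagrangian -!addrA; congr (_ + (_ + _)).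
by rewrite -big_split; apply: eq_bigr => i _ /=; ring.
Qed.

(* The energy is the maximum of the Lagrangians at these vertices of the dual
   constraint set. *)
Definition vertex := ({ffun 'I_n * V * V -> bool} * {ffun 'I_n -> bool * bool})%type.

Definition vertex_q (k : vertex) i x y : R := if k.1 (i, x, y) then 1 else -1.

Definition gamma_if (b : bool) : R := if gamma is gFin g then (if b then g else 0) else 0.

Definition vertex_rho1 (k : vertex) i := gamma_if (k.2 i).1.
Definition vertex_rho2 (k : vertex) i := gamma_if (k.2 i).2.

Definition vertex_lagrangian (k : vertex) :=
  lagrangian (vertex_q k) (vertex_rho1 k) (vertex_rho2 k).

Hypothesis gamma_gt0 : forall g, gamma = gFin g -> 0 < g.

Lemma dual_feasible_vertex k : dfeasible (vertex_q k) (vertex_rho1 k) (vertex_rho2 k).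
Proof.
split=> [i x y|i]; first by rewrite /vertex_q; case: ifP; rewrite ?normr1 ?normrN1.
rewrite /vertex_rho1 /vertex_rho2 /gamma_if /in_0_gamma.
case gammaE: gamma => [|g|] //; have g_gt0 := gamma_gt0 gammaE.
by split; case: ifP; rewrite ?lexx ?ltW.
Qed.

Lemma energy_eq_vertex_lagrangian u : exists k, vertex_lagrangian k u = energy u.
Proof.
exists ([ffun t => u t.1.1 t.2 <= u t.1.1 t.1.2],
        [ffun i => (msize (u i) < (Sl i)%:R, (Su i)%:R < msize (u i))]).
rewrite /vertex_lagrangian /lagrangian /primal_energy; congr (_ + _ + _).
  apply: eq_bigr => i _; rewrite -sum_mul_divw_sign_field //.
  by apply: eq_bigr => x _; congr (_ * _); apply: eq_divw => a b; rewrite /vertex_q ffunE.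
rewrite /vertex_rho1 /vertex_rho2 /gamma_if; case: gamma => [|g|].
- by rewrite big1 // => i _; rewrite !mul0r addr0.
- by apply: eq_bigr => i _; rewrite !ffunE PgamE.
- by rewrite big1 // => i _; rewrite !mul0r addr0.
Qed.

Lemma primal_feasible_exists :
  (\sum_(i < n) Sl i <= #|V| <= \sum_(i < n) Su i)%N ->
  exists u : 'I_n -> V -> R, feasible u.
Proof.
move=> sizes; have [c c_bounds c_sum] := exists_sum_between R Sl_le_Su sizes.
have c_ge0 i : 0 <= c i by have /andP [/(le_trans (ler0n _ _))] := c_bounds i.
have [V0|V_gt0] := posnP #|V|.
  exists (fun _ _ => 0); split.
    by split=> [i x|x]; [rewrite lexx ler01 | have := card0_eq V0 x].
  case: gamma => //= i; rewrite /msize big1 // ler0n andbT.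
  have /andP [Sl_le _] := sizes.
  have : (Sl i <= 0)%N by rewrite -V0 (leq_trans _ Sl_le) // (bigD1 i) //= leq_addr.
  by rewrite leqn0 => /eqP ->.
pose N : R := #|V|%:R; have N_gt0 : 0 < N by rewrite ltr0n.
have msizeE i : msize (fun x : V => c i / N) = c i.
  by rewrite /msize sumr_const -mulr_natl -/N mulrC divfK ?gt_eqF.
exists (fun i _ => c i / N); split; first split => [i x|x].
- rewrite divr_ge0 ?(ltW N_gt0) //= ler_pdivrMr // mul1r /N -c_sum (bigD1 i) //= lerDl.
  exact: sumr_ge0.
- by rewrite -mulr_suml c_sum divff ?gt_eqF.
- by case: gamma => //= i; rewrite msizeE.
Qed.

(* The primal problem as a linear program in the variables [u i x] and an
   epigraph variable [t] for the energy, written [inr tt]. *)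
Definition lp_var := ('I_n * V + unit)%type.

Definition u_of (x : lp_var -> R) i v : R := x (inl (i, v)).

Definition lp_point (u : 'I_n -> V -> R) (t : R) : lp_var -> R :=
  fun o => if o is inl p then u p.1 p.2 else t.

Definition lp_form (A : 'I_n -> V -> R) (a b : R) : affine R lp_var :=
  ([ffun o => if o is inl p then A p.1 p.2 else a], b).

Lemma aff_eval_lp_form A a b x : aff_eval (lp_form A a b) x =
  \sum_i \sum_v A i v * u_of x i v + a * x (inr tt) - b.
Proof.
rewrite /aff_eval big_sumType /= (big_pred1 tt); last by case.
rewrite pair_big /= ffunE; congr (_ + _ - _).
by apply: eq_bigr => -[i v] _; rewrite ffunE.
Qed.

Lemma sum_delta (I : finType) (i0 : I) (F : I -> R) :
  \sum_i (i == i0)%:R * F i = F i0.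
Proof.
by rewrite (bigD1 i0) //= eqxx mul1r big1 ?addr0 // => i /negbTE ->; rewrite mul0r.
Qed.

Definition sgn (b : bool) : R := if b then 1 else -1.

Definition hard_sizes : R := if gamma is gInf then 1 else 0.

Definition size_slack i (upper : bool) (u : 'I_n -> V -> R) : R :=
  if upper then msize (u i) - (Su i)%:R else (Sl i)%:R - msize (u i).

(* Besides [vertex_lagrangian k u <= t]: [u i v >= 0], [sum_i u i v = 1] as two
   inequalities, and the size bounds, which degenerate to [0 <= 0] unless
   [gamma = oo]. *)
Definition aux_cstr := ('I_n * V + V * bool + 'I_n * bool)%type.
Definition lp_cstr := (vertex + aux_cstr)%type.

Definition lp_constraint (j : lp_cstr) : affine R lp_var :=
  match j with
  | inl k => lp_form (dual_cost (vertex_q k) (vertex_rho1 k) (vertex_rho2 k)) (-1)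
      (- \sum_i (vertex_rho1 k i * (Sl i)%:R - vertex_rho2 k i * (Su i)%:R))
  | inr (inl (inl (i0, v0))) => lp_form (fun i v => - ((i == i0)%:R * (v == v0)%:R)) 0 0
  | inr (inl (inr (v0, b))) => lp_form (fun i v => sgn b * (v == v0)%:R) 0 (sgn b)
  | inr (inr (i0, b)) => lp_form (fun i v => hard_sizes * (sgn b * (i == i0)%:R)) 0
      (hard_sizes * (sgn b * (if b then Su i0 else Sl i0)%:R))
  end.

Lemma eval_vertex_cstr k x : aff_eval (lp_constraint (inl k)) x =
  vertex_lagrangian k (u_of x) - x (inr tt).
Proof.
rewrite aff_eval_lp_form /vertex_lagrangian lagrangianE.
under eq_bigr do under eq_bigr do rewrite mulrC.
ring.
Qed.

Lemma eval_nonneg_cstr i0 v0 x :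
  aff_eval (lp_constraint (inr (inl (inl (i0, v0))))) x = - u_of x i0 v0.
Proof.
rewrite aff_eval_lp_form mul0r addr0 subr0 -(sum_delta i0 (fun i => - u_of x i v0)).
apply: eq_bigr => i _; rewrite -(sum_delta v0 (fun v => (i == i0)%:R * - u_of x i v)).
by apply: eq_bigr => v _; ring.
Qed.

Lemma eval_sum_cstr v0 b x : aff_eval (lp_constraint (inr (inl (inr (v0, b))))) x =
  sgn b * (\sum_i u_of x i v0 - 1).
Proof.
rewrite aff_eval_lp_form mul0r addr0 mulrBr mulr1 mulr_sumr; congr (_ - _).
apply: eq_bigr => i _; rewrite -(sum_delta v0 (fun v => sgn b * u_of x i v)).
by apply: eq_bigr => v _; ring.
Qed.

Lemma eval_size_cstr i0 b x : aff_eval (lp_constraint (inr (inr (i0, b)))) x =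
  hard_sizes * size_slack i0 b (u_of x).
Proof.
rewrite aff_eval_lp_form mul0r addr0.
have -> : \sum_i \sum_v hard_sizes * (sgn b * (i == i0)%:R) * u_of x i v =
          hard_sizes * (sgn b * msize (u_of x i0)).
  rewrite -(sum_delta i0 (fun i => hard_sizes * (sgn b * msize (u_of x i)))).
  by apply: eq_bigr => i _; rewrite /msize !mulr_sumr; apply: eq_bigr => v _; ring.
by rewrite /size_slack /sgn; case: b; ring.
Qed.

Lemma lp_point_sat u t : feasible u -> energy u <= t ->
  sat_all lp_constraint (lp_point u t).
Proof.
move=> u_feas Et; have [[u_01 u_sum1] u_sizes] := u_feas.
case=> [k|[[[i x]|[x b]]|[i b]]].
- rewrite eval_vertex_cstr subr_le0; apply: le_trans Et.
  exact: lagrangian_le_energy u_feas (dual_feasible_vertex k).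
- by rewrite eval_nonneg_cstr oppr_le0; have /andP [] := u_01 i x.
- by rewrite eval_sum_cstr u_sum1 subrr mulr0.
- rewrite eval_size_cstr /hard_sizes /size_slack; move: u_sizes.
  case: gamma; rewrite ?mul0r // => /(_ i) /andP [? ?].
  by case: b; rewrite mul1r subr_le0.
Qed.

Section LPSolution.
Variable x : lp_var -> R.
Hypothesis x_sat : sat_all lp_constraint x.

Lemma lp_sat_simplex : (forall i v, 0 <= u_of x i v) /\ (forall v, \sum_i u_of x i v = 1).
Proof.
split=> [i v|v].
  by have := x_sat (inr (inl (inl (i, v)))); rewrite eval_nonneg_cstr oppr_le0.
have := x_sat (inr (inl (inr (v, true)))); rewrite eval_sum_cstr /sgn mul1r subr_le0.
have := x_sat (inr (inl (inr (v, false)))).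
rewrite eval_sum_cstr /sgn mulN1r oppr_le0 subr_ge0.
by move=> le1 ge1; apply/eqP; rewrite eq_le le1 ge1.
Qed.

Lemma lp_sat_feasible : feasible (u_of x).
Proof.
have [u_ge0 u_sum1] := lp_sat_simplex; split; first split => // i v.
  by rewrite u_ge0 /= -(u_sum1 v) (bigD1 i) //= lerDl sumr_ge0.
have slack_le0 i b : hard_sizes * size_slack i b (u_of x) <= 0.
  by rewrite -eval_size_cstr; apply: x_sat.
move: slack_le0; rewrite /hard_sizes /size_slack; case: gamma => // slack_le0 i.
by have := slack_le0 i true; have := slack_le0 i false; rewrite !mul1r !subr_le0 => -> ->.
Qed.

Lemma lp_sat_energy : energy (u_of x) <= x (inr tt).
Proof.
have [k <-] := energy_eq_vertex_lagrangian (u_of x).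
by have := x_sat (inl k); rewrite eval_vertex_cstr subr_le0.
Qed.

End LPSolution.

Section Certificate.
Variables (m : R) (y : lp_cstr -> R).
Hypothesis y_ge0 : forall j, 0 <= y j.
Hypothesis y_cert : forall x, m - x (inr tt) = \sum_j y j * aff_eval (lp_constraint j) x.

Definition cert_q i a b : R := \sum_k y (inl k) * vertex_q k i a b.
Definition cert_rho1 i : R :=
  \sum_k y (inl k) * vertex_rho1 k i + hard_sizes * y (inr (inr (i, false))).
Definition cert_rho2 i : R :=
  \sum_k y (inl k) * vertex_rho2 k i + hard_sizes * y (inr (inr (i, true))).

Definition aux_part (u : 'I_n -> V -> R) : R :=
  \sum_(g : aux_cstr) y (inr g) * aff_eval (lp_constraint (inr g)) (lp_point u 0).

Lemma certE u t : m - t = \sum_k y (inl k) * (vertex_lagrangian k u - t) + aux_part u.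
Proof.
rewrite (y_cert (lp_point u t)) big_sumType; congr (_ + _).
  by apply: eq_bigr => k _; rewrite eval_vertex_cstr.
apply: eq_bigr => -[[[i v]|[v b]]|[i b]] _;
  by rewrite ?eval_nonneg_cstr ?eval_sum_cstr ?eval_size_cstr.
Qed.

(* Comparing the coefficients of [t] in [certE]. *)
Lemma sum_vertex_weights : \sum_k y (inl k) = 1.
Proof.
have := certE (fun _ _ => 0) 1; have := certE (fun _ _ => 0) 0.
under eq_bigr do rewrite subr0.
under [in X in _ -> X]eq_bigr do rewrite mulrBr mulr1.
rewrite sumrB subr0; lra.
Qed.

Lemma cert_dual_feasible : dfeasible cert_q cert_rho1 cert_rho2.
Proof.
have yK_ge0 k : 0 <= y (inl k) by [].
split=> [i a b|i].
  apply: le_trans (ler_norm_sum _ _ _) _; rewrite -sum_vertex_weights.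
  apply: ler_sum => k _; rewrite normrM ger0_norm // ler_piMr //.
  by have [q_le1 _] := dual_feasible_vertex k; apply: q_le1.
rewrite /cert_rho1 /cert_rho2 /vertex_rho1 /vertex_rho2 /gamma_if /hard_sizes /in_0_gamma.
case gammaE: gamma => [|g|].
- by rewrite !big1 ?mul0r ?addr0 // => k _; rewrite mulr0.
- have g_gt0 := gamma_gt0 gammaE.
  have avg_in (b : vertex -> bool) :
      0 <= \sum_k y (inl k) * (if b k then g else 0) <= g.
    rewrite sumr_ge0 => [|k _]; last by rewrite mulr_ge0 //; case: ifP => // _; apply: ltW.
    rewrite -[X in _ <= X]mul1r -sum_vertex_weights mulr_suml.
    by apply: ler_sum => k _; rewrite ler_wpM2l //; case: ifP => // _; apply: ltW.
  by rewrite !mul0r !addr0; split; apply: avg_in.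
- by rewrite !big1 ?mul1r ?add0r // => k _; rewrite mulr0.
Qed.

Lemma aux_part_le u : (forall i x, 0 <= u i x) -> (forall x, \sum_i u i x = 1) ->
  aux_part u <= \sum_(i < n)
    (hard_sizes * y (inr (inr (i, false))) * ((Sl i)%:R - msize (u i)) +
     hard_sizes * y (inr (inr (i, true))) * (msize (u i) - (Su i)%:R)).
Proof.
move=> u_ge0 u_sum1; rewrite /aux_part !big_sumType /= -[X in _ <= X]add0r -addrA.
apply: lerD.
  apply: sumr_le0 => -[i v] _; rewrite eval_nonneg_cstr.
  by rewrite mulr_ge0_le0 // oppr_le0.
rewrite big1 ?add0r => [|[v b] _]; last by rewrite eval_sum_cstr u_sum1 subrr !mulr0.
pose size_term i b := y (inr (inr (i, b))) * (hard_sizes * size_slack i b u).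
rewrite (eq_bigr (fun p => size_term p.1 p.2)); last first.
  by move=> [i b] _; rewrite eval_size_cstr.
rewrite -(pair_bigA _ size_term) /=; apply: ler_sum => i _.
by rewrite big_bool /= /size_term /size_slack; lra.
Qed.

Lemma le_cert_dual_value (i0 : 'I_n) : m <= dvalue cert_q cert_rho1 cert_rho2.
Proof.
have [u [u_ge0 u_sum1 <-]] := lagrangian_eq_dual_value cert_q cert_rho1 cert_rho2 i0.
have := certE u 0; under eq_bigr do rewrite subr0.
rewrite subr0 => ->.
rewrite lagrangianD_rho lagrangian_comb ?sum_vertex_weights // lerD2l.
exact: aux_part_le.
Qed.

End Certificate.

Lemma strong_duality :
  (0 < n)%N -> (\sum_(i < n) Sl i <= #|V| <= \sum_(i < n) Su i)%N ->
  exists u, [/\ feasible u, forall v, feasible v -> energy u <= energy v &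
    exists q rho1 rho2, dfeasible q rho1 rho2 /\ energy u <= dvalue q rho1 rho2].
Proof.
move=> n_gt0 sizes; have [u0 u0_feas] := primal_feasible_exists sizes.
pose k0 : vertex := ([ffun=> true], [ffun=> (false, false)]).
have lp_bounded : exists m, forall x, sat_all lp_constraint x -> m <= x (inr tt).
  exists (dvalue (vertex_q k0) (vertex_rho1 k0) (vertex_rho2 k0)) => x x_sat.
  have [u_ge0 u_sum1] := lp_sat_simplex x_sat.
  apply: le_trans (dual_value_le_lagrangian _ _ _ u_ge0 u_sum1) _.
  by have := x_sat (inl k0); rewrite eval_vertex_cstr subr_le0.
have [xs [xs_sat xs_min [y y_ge0 y_cert]]] :=
  lp_min (ex_intro _ _ (lp_point_sat u0_feas (lexx _))) lp_bounded.
exists (u_of xs); split; first exact: lp_sat_feasible.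
  move=> v v_feas; apply: le_trans (lp_sat_energy xs_sat) _.
  exact: xs_min (lp_point_sat v_feas (lexx _)).
exists (cert_q y), (cert_rho1 y), (cert_rho2 y).
split; first exact: cert_dual_feasible y_ge0 y_cert.
exact: le_trans (lp_sat_energy xs_sat) (le_cert_dual_value y_ge0 y_cert (Ordinal n_gt0)).
Qed.

End Duality.

Theorem theorem1 (R : realType) (V : finType) (n : nat) (w : V -> V -> R)
    (C : 'I_n -> V -> R) (Sl Su : 'I_n -> nat) (gamma : gam R) :
  (2 <= n)%N ->
  (forall x y, w x y = w y x) ->
  (forall x y, 0 <= w x y) ->
  (forall i, (Sl i <= Su i)%N) ->
  (\sum_(i < n) Sl i <= #|V| <= \sum_(i < n) Su i)%N ->
  (forall g, gamma = gFin g -> 0 < g) ->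
  exists u : 'I_n -> V -> R,
    [/\ primal_feasible Sl Su gamma u,
        (forall v, primal_feasible Sl Su gamma v ->
           primal_energy w C Sl Su gamma u <= primal_energy w C Sl Su gamma v),
        (forall q rho1 rho2, dual_feasible gamma q rho1 rho2 ->
           dual_value w C Sl Su q rho1 rho2 <= primal_energy w C Sl Su gamma u) &
        (forall eps : R, 0 < eps -> exists q rho1 rho2,
           dual_feasible gamma q rho1 rho2 /\
           primal_energy w C Sl Su gamma u - eps < dual_value w C Sl Su q rho1 rho2)].
Proof.
move=> n_ge2 w_sym w_ge0 Sl_le_Su sizes gamma_gt0.
have [u [u_feas u_opt [q [rho1 [rho2 [q_feas u_le]]]]]] :=
  strong_duality C w_sym w_ge0 Sl_le_Su gamma_gt0 (ltnW n_ge2) sizes.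
exists u; split => // [q' rho1' rho2' q'_feas|eps eps_gt0].
  exact: (weak_duality _ w_sym w_ge0 Sl_le_Su u_feas q'_feas).
exists q, rho1, rho2; split => //.
by apply: lt_le_trans u_le; rewrite ltrBlDr ltrDl.
Qed.
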